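(* Fix a tomographically complete measurement $\mu^\diamond$ on $\mathcal X=\mathbb C^n$ with finite outcome set $\mathcal Y$. Let $\Gamma:\mathrm{Dens}(\mathcal X)\to\mathcal R$ be a quantum property and $\Gamma^\diamond:\mathcal P^\diamond\to\mathcal R$ be $\Gamma^\diamond(p)=\Gamma(\phi^+p)$. Then $\Gamma$ is elicitable (by a quantum score) if and only if $\Gamma^\diamond$ is elicitable (by a classical scoring rule on $\mathcal P^\diamond$), and for $\mathcal R\subseteq\mathbb R^k$, $\Gamma$ is identifiable if and only if $\Gamma^\diamond$ is identifiable.
   Context: $\mathrm{Herm}(\mathcal X)$ the Hermitian matrices with $\langle X,Y\rangle=\mathrm{Tr}(X^*Y)$, $\mathrm{Dens}(\mathcal X)$ the density matrices. A measurement $\mu=\{\mu_y\}_{y\in\mathcal Y}$ is a family of positive semidefinite operators with $\sum_y\mu_y=I$; tomographically complete if its real span is $\mathrm{Herm}(\mathcal X)$. Let $\phi:\mathrm{Herm}(\mathcal X)\to\mathbb R^{\mathcal Y}$, $(\phi X)_y=\langle\mu^\diamond_y,X\rangle$ (injective), $\phi^+$ its Moore–Penrose pseudoinverse (a linear left inverse), and $\mathcal P^\diamond=\phi(\mathrm{Dens}(\mathcal X))\subseteq\Delta_{\mathcal Y}$. A quantum property is any map $\Gamma:\mathrm{Dens}(\mathcal X)\to\mathcal R$. A quantum score for reports in $\mathcal R$ is $S=(s,\mu)$ with $s:\mathcal R\times\mathbb N\to\mathbb R$, $\mu:\mathcal R\to$ measurements, expected score $S(r;\rho)=\sum_y\langle\mu(r)_y,\rho\rangle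 s(r,y)$; $S$ elicits $\Gamma$ if $\{\Gamma(\rho)\}=\arg\max_{r}S(r;\rho)$ for all $\rho$. A classical scoring rule $\hat s:\mathcal R\times\mathcal Y\to\mathbb R$ elicits $\Gamma^\diamond$ on $\mathcal P^\diamond$ if $\{\Gamma^\diamond(p)\}=\arg\max_r\sum_yp_y\hat s(r,y)$ for all $p\in\mathcal P^\diamond$. $\Gamma:\mathrm{Dens}(\mathcal X)\to\mathbb R^k$ is identifiable if for each $r$ in its range there is $V(r)\in\mathrm{Herm}(\mathcal X)^k$ with $\Gamma(\rho)=r\iff(\langle V(r)_i,\rho\rangle)_{i=1}^k=0$ for all $\rho$; a classical $\Gamma^\diamond:\mathcal P^\diamond\to\mathbb R^k$ is identifiable if for each $r$ in its range there is $v(r)\in\mathbb R^{k\times\mathcal Y}$ with $\Gamma^\diamond(p)=r\iff v(r)p=0$ for all $p\in\mathcal P^\diamond$. *)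

From HB Require Import structures.
From mathcomp Require Import all_boot all_order all_algebra.
From mathcomp Require Import complex.
Set Implicit Arguments. Unset Strict Implicit. Unset Printing Implicit Defensive.
Import Order.TTheory GRing.Theory Num.Theory.
Local Open Scope ring_scope.

Section QDefs.
Variable R : rcfType.
Local Notation C := (R[i]).

Definition adjmx n (A : 'M[C]_n) : 'M[C]_n := (map_mx Num.conj A)^T.

Definition herm_mx n (A : 'M[C]_n) : Prop := adjmx A = A.

(* <X, Y> = Tr(X^* Y); for Hermitian X, Y this is real, and we take its
   real part as an element of R *)
Definition hip n (A B : 'M[C]_n) : R := @complex.Re R (\tr (adjmx A *m B)).

Definition psd n (A : 'M[C]_n) : Prop :=
  forall v : 'cV[C]_n, 0 <= ((map_mx Num.conj v)^T *m A *m v) ord0 ord0.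

Definition density n (rho : 'M[C]_n) : Prop := psd rho /\ \tr rho = 1.

Definition measurement n (Y : finType) (mu : Y -> 'M[C]_n) : Prop :=
  (forall y, psd (mu y)) /\ \sum_y mu y = 1%:M.

Definition tomo_complete n (Y : finType) (mu : Y -> 'M[C]_n) : Prop :=
  measurement mu /\
  forall H : 'M[C]_n, herm_mx H ->
    exists c : Y -> R, H = \sum_y ((c y)%:C)%C *: mu y.

Definition phi n (Y : finType) (mu : Y -> 'M[C]_n) (X : 'M[C]_n) : Y -> R :=
  fun y => hip (mu y) X.

Definition Pdiamond n (Y : finType) (mu : Y -> 'M[C]_n) (p : Y -> R) : Prop :=
  exists rho, density rho /\ p = phi mu rho.

(* ---- quantum scores ----
   A quantum score S = (s, mu): for each report r, mu r is a measurement with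
   outcomes in nat; we take it with finitely many outcomes 0 .. m r - 1. *)
Definition quantum_measurement n (m : nat) (mu : nat -> 'M[C]_n) : Prop :=
  (forall y, (y < m)%N -> psd (mu y)) /\ \sum_(y < m) mu y = 1%:M.

Definition qscore_expected n (Rep : Type) (s : Rep -> nat -> R)
  (m : Rep -> nat) (mu : Rep -> nat -> 'M[C]_n) (r : Rep) (rho : 'M[C]_n) : R :=
  \sum_(y < m r) hip (mu r y) rho * s r y.

Definition qscore_elicits n (Rep : Type) (s : Rep -> nat -> R)
  (m : Rep -> nat) (mu : Rep -> nat -> 'M[C]_n) (Gamma : 'M[C]_n -> Rep) : Prop :=
  forall rho, density rho -> forall r, r <> Gamma rho ->
    qscore_expected s m mu r rho < qscore_expected s m mu (Gamma rho) rho.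

Definition q_elicitable n (Rep : Type) (Gamma : 'M[C]_n -> Rep) : Prop :=
  exists (s : Rep -> nat -> R) (m : Rep -> nat) (mu : Rep -> nat -> 'M[C]_n),
    (forall r, quantum_measurement (m r) (mu r)) /\ qscore_elicits s m mu Gamma.

Definition c_elicitable n (Y : finType) (mu : Y -> 'M[C]_n) (Rep : Type)
  (G : (Y -> R) -> Rep) : Prop :=
  exists shat : Rep -> Y -> R,
    forall p, Pdiamond mu p -> forall r, r <> G p ->
      \sum_y p y * shat r y < \sum_y p y * shat (G p) y.

Definition q_identifiable n k (Gamma : 'M[C]_n -> 'rV[R]_k) : Prop :=
  forall r, (exists rho0, density rho0 /\ Gamma rho0 = r) ->
    exists V : 'I_k -> 'M[C]_n, (forall i, herm_mx (V i)) /\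
      forall rho, density rho ->
        (Gamma rho = r <-> forall i, hip (V i) rho = 0).

Definition c_identifiable n (Y : finType) (mu : Y -> 'M[C]_n) k
  (G : (Y -> R) -> 'rV[R]_k) : Prop :=
  forall r, (exists p0, Pdiamond mu p0 /\ G p0 = r) ->
    exists v : 'I_k -> Y -> R,
      forall p, Pdiamond mu p ->
        (G p = r <-> forall i, \sum_y v i y * p y = 0).

End QDefs.

From HB Require Import structures.
From mathcomp Require Import all_boot all_order all_algebra.
From mathcomp Require Import complex ring.
From Stdlib Require Import ClassicalEpsilon.
Set Implicit Arguments. Unset Strict Implicit. Unset Printing Implicit Defensive.
Import Order.TTheory GRing.Theory Num.Theory.
Local Open Scope complex_scope.
Local Open Scope ring_scope.

(* Tomographic completeness makes every Hermitian matrix a real combination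
   of the effects mu_y, so each functional rho |-> <H, rho> with H Hermitian
   is a linear functional of the outcome distribution phi(rho), and
   conversely.  Hence an expected quantum score is an expected classical
   score of phi(rho), and an identification functional <V_i, rho> is
   v_i . phi(rho); conversely, measuring mu for every report turns a
   classical scoring rule into a quantum score.  As psi inverts phi on
   density matrices, Gamma(rho) = Gamma^diamond(phi rho) throughout. *)

Section HermitianForms.
Variables (R : rcfType) (n : nat).
Local Notation C := R[i].
Local Notation e j := (delta_mx j ord0 : 'cV[C]_n).

Lemma conjC_i : ('i%C : C)^* = - 'i%C.
Proof. by apply/eqP; rewrite eq_complex /= oppr0 !eqxx. Qed.

Lemma conj_swap_of_real (x y : C) :
  (x + y)^* = x + y -> ('i%C * (x - y))^* = 'i%C * (x - y) -> y^* = x.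
Proof.
rewrite rmorphM rmorphB rmorphD /= conjC_i => sum_real diff_real.
have i2 : ('i%C : C) * 'i%C = -1 by rewrite -expr2 sqr_i.
set i := ('i%C : C) in diff_real i2 *.
(* the first hypothesis minus i times the second isolates 2 (y^* - x) *)
have : 2 * (y^* - x) = (x^* + y^* - (x + y)) - i * (- i * (x^* - y^*) - i * (x - y))
                       - (i * i + 1) * (x^* - y^* + x - y).
  by ring.
rewrite sum_real diff_real i2 !subrr addNr mul0r mulr0 !subr0 => /eqP.
by rewrite mulf_eq0 pnatr_eq0 subr_eq0 => /eqP.
Qed.

Definition sform (A : 'M[C]_n) (u v : 'cV[C]_n) : C :=
  ((map_mx Num.conj u)^T *m A *m v) ord0 ord0.

Lemma sformDl A u1 u2 v : sform A (u1 + u2) v = sform A u1 v + sform A u2 v.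
Proof. by rewrite /sform map_mxD linearD !mulmxDl mxE. Qed.

Lemma sformDr A u v1 v2 : sform A u (v1 + v2) = sform A u v1 + sform A u v2.
Proof. by rewrite /sform mulmxDr mxE. Qed.

Lemma sformZl A (a : C) u v : sform A (a *: u) v = a^* * sform A u v.
Proof.
rewrite /sform (_ : map_mx _ (a *: u) = a^* *: map_mx Num.conj u).
  by rewrite linearZ /= -!scalemxAl mxE.
by apply/matrixP => j k; rewrite !mxE rmorphM.
Qed.

Lemma sformZr A (b : C) u v : sform A u (b *: v) = b * sform A u v.
Proof. by rewrite /sform -scalemxAr mxE. Qed.

Lemma sform_delta A j k : sform A (e j) (e k) = A j k.
Proof. by rewrite /sform map_delta_mx /= trmx_delta -rowE -colE !mxE. Qed.

Lemma psd_sform_sym_real A u v : psd A ->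
  (sform A u v + sform A v u)^* = sform A u v + sform A v u.
Proof.
move=> psdA; have real w : (sform A w w)^* = sform A w w by apply/geC0_conj/psdA.
have -> : sform A u v + sform A v u =
    sform A (u + v) (u + v) - sform A u u - sform A v v.
  rewrite !(sformDl, sformDr); ring.
by rewrite !rmorphB /= !real.
Qed.

Lemma psd_herm (A : 'M[C]_n) : psd A -> herm_mx A.
Proof.
(* polarizing along (e_p, e_q) and (e_p, i e_q) controls A p q + A q p and
   i (A p q - A q p) *)
move=> psdA; apply/matrixP => p q; rewrite !mxE.
apply: conj_swap_of_real.
  by have := psd_sform_sym_real (e p) (e q) psdA; rewrite !sform_delta.
have := psd_sform_sym_real (e p) ('i%C *: e q) psdA.
by rewrite sformZl sformZr conjC_i !sform_delta mulNr -mulrBr.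
Qed.

Lemma density_herm (rho : 'M[C]_n) : density rho -> herm_mx rho.
Proof. by case=> /psd_herm. Qed.

Lemma adjmx0 : adjmx (0 : 'M[C]_n) = 0.
Proof. by rewrite /adjmx map_mx0 trmx0. Qed.

Lemma adjmxD (A B : 'M[C]_n) : adjmx (A + B) = adjmx A + adjmx B.
Proof. by rewrite /adjmx map_mxD linearD. Qed.

Lemma adjmxZ_real (c : R) (A : 'M[C]_n) : adjmx (c%:C *: A) = c%:C *: adjmx A.
Proof.
rewrite /adjmx -linearZ /=; congr (_^T); apply/matrixP => j k.
by rewrite !mxE rmorphM /=; congr (_ * _); exact: conjc_real.
Qed.

Lemma herm_sum (Y : finType) (c : Y -> R) (F : Y -> 'M[C]_n) :
  (forall y, herm_mx (F y)) -> herm_mx (\sum_y (c y)%:C *: F y).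
Proof.
move=> hermF; apply: (big_ind (fun A => adjmx A = A)).
- exact: adjmx0.
- by move=> A B hermA hermB; rewrite adjmxD hermA hermB.
- by move=> y _; rewrite adjmxZ_real hermF.
Qed.

Lemma hip0 (M : 'M[C]_n) : hip 0 M = 0.
Proof. by rewrite /hip adjmx0 mul0mx mxtrace0. Qed.

Lemma hipD (A B M : 'M[C]_n) : hip (A + B) M = hip A M + hip B M.
Proof. by rewrite /hip adjmxD mulmxDl mxtraceD raddfD. Qed.

Lemma hipZ_real (c : R) (A M : 'M[C]_n) : hip (c%:C *: A) M = c * hip A M.
Proof.
rewrite /hip adjmxZ_real -scalemxAl mxtraceZ.
by case: (\tr _) => a b /=; rewrite mul0r subr0.
Qed.

Lemma hip_sum (Y : finType) (c : Y -> R) (F : Y -> 'M[C]_n) M :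
  hip (\sum_y (c y)%:C *: F y) M = \sum_y c y * hip (F y) M.
Proof.
rewrite (big_morph (fun A => hip A M) (fun A B => hipD A B M) (hip0 M)).
by apply: eq_bigr => y _; rewrite hipZ_real.
Qed.

End HermitianForms.

Section Tomography.
Variables (R : rcfType) (n : nat) (Y : finType) (mu : Y -> 'M[R[i]]_n).
Hypothesis mu_tomo : tomo_complete mu.

Lemma tomo_herm y : herm_mx (mu y).
Proof. by case: mu_tomo => -[psd_mu _] _; apply: psd_herm. Qed.

Lemma hip_tomo_coords (T : Type) (H : T -> 'M[R[i]]_n) :
  (forall t, herm_mx (H t)) ->
  exists c : T -> Y -> R, forall t rho, hip (H t) rho = \sum_y c t y * phi mu rho y.
Proof.
move=> hermH.
have coords t : {c : Y -> R | H t = \sum_y (c y)%:C *: mu y}.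
  by apply: constructive_indefinite_description; case: mu_tomo => _; apply.
exists (fun t => sval (coords t)) => t rho.
by rewrite {1}(svalP (coords t)) hip_sum.
Qed.

Lemma qscore_expected_classical (Rep : Type) (s : Rep -> nat -> R)
    (m : Rep -> nat) (nu : Rep -> nat -> 'M[R[i]]_n) :
  (forall r, quantum_measurement (m r) (nu r)) ->
  exists shat : Rep -> Y -> R, forall r rho,
    qscore_expected s m nu r rho = \sum_y phi mu rho y * shat r y.
Proof.
move=> meas_nu.
have herm_nu (t : {r : Rep & 'I_(m r)}) : herm_mx (nu (tag t) (tagged t)).
  by apply: psd_herm; apply: (meas_nu (tag t)).1.
have [c nuE] := hip_tomo_coords herm_nu.
exists (fun r z => \sum_(y < m r) c (Tagged (fun r => 'I_(m r)) y) z * s r y) => r rho.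
rewrite /qscore_expected.
under eq_bigr => y _ do rewrite (nuE (Tagged (fun r => 'I_(m r)) y)) mulr_suml.
rewrite exchange_big; apply: eq_bigr => z _; rewrite mulr_sumr.
by apply: eq_bigr => y _; rewrite mulrCA mulrA.
Qed.

End Tomography.

Section EnumOutcomes.
Variables (Y : finType) (A : Type).

(* Outcomes of a quantum score are indexed by nat: transport along the
   enumeration of Y, padding with a junk value past #|Y|. *)
Definition enum_ext (f : Y -> A) (a0 : A) (j : nat) : A :=
  if insub j is Some i then f (enum_val (i : 'I_#|Y|)) else a0.

Lemma enum_extE f a0 (i : 'I_#|Y|) : enum_ext f a0 i = f (enum_val i).
Proof. by rewrite /enum_ext valK. Qed.

End EnumOutcomes.

Section EnumMeasurement.
Variables (R : rcfType) (n : nat) (Y : finType) (mu : Y -> 'M[R[i]]_n).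

Lemma quantum_measurement_enum :
  measurement mu -> quantum_measurement #|Y| (enum_ext mu 0).
Proof.
case=> psd_mu sum_mu; split=> [y y_lt|].
  by rewrite /enum_ext insubT.
under eq_bigr => i _ do rewrite enum_extE.
by rewrite -big_enum_val -sum_mu; apply: eq_bigl.
Qed.

Lemma qscore_expected_enum (Rep : Type) (shat : Rep -> Y -> R) r rho :
  qscore_expected (fun r => enum_ext (shat r) 0) (fun=> #|Y|)
    (fun=> enum_ext mu 0) r rho = \sum_y phi mu rho y * shat r y.
Proof.
rewrite /qscore_expected; under eq_bigr => i _ do rewrite !enum_extE.
by rewrite -(big_enum_val (fun y => phi mu rho y * shat r y)).
Qed.

End EnumMeasurement.

Section Transfer.
Variables (R : rcfType) (n : nat) (Y : finType) (mu : Y -> 'M[R[i]]_n)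
  (psi : (Y -> R) -> 'M[R[i]]_n).
Hypothesis mu_tomo : tomo_complete mu.
Hypothesis psiK : forall X : 'M[R[i]]_n, herm_mx X -> psi (phi mu X) = X.

Lemma psiK_density rho : density rho -> psi (phi mu rho) = rho.
Proof. by move=> /density_herm /psiK. Qed.

Lemma Pdiamond_phi rho : density rho -> Pdiamond mu (phi mu rho).
Proof. by exists rho. Qed.

Lemma q_elicitable_classical (Rep : Type) (Gamma : 'M[R[i]]_n -> Rep) :
  q_elicitable Gamma -> c_elicitable mu (fun p => Gamma (psi p)).
Proof.
case=> s [m [nu [meas_nu elicits]]].
have [shat scoreE] := qscore_expected_classical mu_tomo s meas_nu.
exists shat => _ [rho [rho_dens ->]] r; rewrite psiK_density // -!scoreE.
exact: elicits.
Qed.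

Lemma c_elicitable_quantum (Rep : Type) (Gamma : 'M[R[i]]_n -> Rep) :
  c_elicitable mu (fun p => Gamma (psi p)) -> q_elicitable Gamma.
Proof.
case=> shat elicits; exists (fun r => enum_ext (shat r) 0), (fun=> #|Y|),
  (fun=> enum_ext mu 0); split=> [r|rho rho_dens r].
  by case: mu_tomo => meas_mu _; apply: quantum_measurement_enum.
rewrite !qscore_expected_enum.
by have := elicits _ (Pdiamond_phi rho_dens) r; rewrite psiK_density.
Qed.

Lemma q_identifiable_classical k (Gamma : 'M[R[i]]_n -> 'rV[R]_k) :
  q_identifiable Gamma -> c_identifiable mu (fun p => Gamma (psi p)).
Proof.
move=> ident r [_ [[rho0 [rho0_dens ->]]]]; rewrite psiK_density // => Gamma_rho0.
have [V [hermV V_ident]] := ident r (ex_intro _ rho0 (conj rho0_dens Gamma_rho0)).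
have [v VE] := hip_tomo_coords mu_tomo hermV.
exists v => _ [rho [rho_dens ->]]; rewrite psiK_density // V_ident //.
by split=> zero i; [rewrite -VE | rewrite VE]; apply: zero.
Qed.

Lemma c_identifiable_quantum k (Gamma : 'M[R[i]]_n -> 'rV[R]_k) :
  c_identifiable mu (fun p => Gamma (psi p)) -> q_identifiable Gamma.
Proof.
move=> ident r [rho0 [rho0_dens Gamma_rho0]].
have [v v_ident] : exists v : 'I_k -> Y -> R, forall p, Pdiamond mu p ->
    (Gamma (psi p) = r <-> forall i, \sum_y v i y * p y = 0).
  apply: ident; exists (phi mu rho0).
  by rewrite psiK_density //; split=> //; apply: Pdiamond_phi.
exists (fun i => \sum_y (v i y)%:C *: mu y); split=> [i|rho rho_dens].
  exact/herm_sum/tomo_herm.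
rewrite -{1}(psiK_density rho_dens) v_ident; last exact: Pdiamond_phi.
by split=> zero i; move: (zero i); rewrite hip_sum.
Qed.

End Transfer.

Theorem proposition6p2 (R : rcfType) (n : nat) (Y : finType)
  (mu0 : Y -> 'M[R[i]]_n) (psi : (Y -> R) -> 'M[R[i]]_n) :
  tomo_complete mu0 ->
  (forall X : 'M[R[i]]_n, herm_mx X -> psi (phi mu0 X) = X) ->
  (forall (Rep : Type) (Gamma : 'M[R[i]]_n -> Rep),
      q_elicitable Gamma <-> c_elicitable mu0 (fun p => Gamma (psi p))) /\
  (forall (k : nat) (Gamma : 'M[R[i]]_n -> 'rV[R]_k),
      q_identifiable Gamma <-> c_identifiable mu0 (fun p => Gamma (psi p))).
Proof.
move=> mu0_tomo psiK; split=> [Rep Gamma | k Gamma]; split.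
- exact: q_elicitable_classical.
- exact: c_elicitable_quantum.
- exact: q_identifiable_classical.
- exact: c_identifiable_quantum.
Qed.
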